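(* Let $b\ge 2$ and $n\ge 1$ be integers. Then $$\mathrm{Ap}(T_b(n),s_0)=\Big\{\sum_{j=1}^{n+1} t_j s_j \;:\; (t_1,\dots,t_{n+1})\in R_b(n)\Big\}.$$
   Context: For integers $b\ge 2$, $n\ge 0$, $i\ge0$ put $s_i=(b+1)b^{n+i}-1$ and $T_b(n)=\langle\{s_i:i\in\mathbb{N}\}\rangle$ (the submonoid of $(\mathbb{N},+)$ generated by the $s_i$; it is a numerical semigroup). For a numerical semigroup $S$ and $x\in S\setminus\{0\}$, the Apéry set is $\mathrm{Ap}(S,x)=\{s\in S : s-x\notin S\}$. $R_b(n)$ is the set of tuples $(t_1,\dots,t_{n+1})\in\{0,1,\dots,b\}^{n+1}$ satisfying: (i) $t_{n+1}\le b-1$; (ii) if $t_j=b$ for some $j$, then $t_i=0$ for all $i<j$; (iii) if $t_{n+1}=b-1$, then $t_n\le b-1$, and if moreover $t_n=b-1$, then $t_1=\dots=t_{n-1}=0$. *)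

From mathcomp Require Import all_boot.

Definition sgen (b n i : nat) : nat := (b.+1) * b ^ (n + i) - 1.

Definition inT (b n x : nat) : Prop :=
  exists c : seq nat, x = \sum_(i < size c) nth 0 c i * sgen b n i.

Definition inApery (S : nat -> Prop) (m x : nat) : Prop :=
  S x /\ ~ (m <= x /\ S (x - m)).

(* R_b(n): tuples (t_1,...,t_{n+1}) in {0..b}^{n+1}, represented as
   t : nat -> nat where only indices 1..n+1 matter. *)
Definition inR (b n : nat) (t : nat -> nat) : Prop :=
  (forall j, 1 <= j <= n.+1 -> t j <= b) /\
  t n.+1 <= b - 1 /\
  (forall j, 1 <= j <= n.+1 -> t j = b -> forall i, 1 <= i < j -> t i = 0) /\
  (t n.+1 = b - 1 ->
     t n <= b - 1 /\ (t n = b - 1 -> forall i, 1 <= i <= n.-1 -> t i = 0)).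

From mathcomp Require Import all_boot zify.

Set Implicit Arguments.
Unset Strict Implicit.

(* Put M = s_0 and e_i = 1 + b + ... + b^(i-1), so that s_i = M b^i + (b-1) e_i.
   A combination with coefficients c_i then equals M Y + (b-1) E, where
   Y = sum c_i b^i, E = sum c_i e_i, and Y = (b-1) E + N with N = sum c_i.
   Since gcd(M, b-1) = 1, the residue of such an element modulo M is that of
   (b-1) E.  The tuples t of R_b(n) realise every value E < M, and each gives an
   Apery element w = sum t_j s_j: a representation of w - M would have
   E' = E + k M and Y' = Y - 1 - (b-1) k.  If k > 0 its digit sum N' would make
   N exceed the bound (n+2) b <= (b-1)(M+1); if k = 0, the digits of t form an
   almost canonical base-b expansion of Y, which forces every expansion of
   Y - 1 to have digit sum at least N + b - 2 > N'.  An Apery set has at most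
   one element in each residue class, so these are all of them. *)

Definition wsum (L : nat) (g f : nat -> nat) : nat := \sum_(0 <= i < L) g i * f i.

Notation wsum_seq c f := (wsum (size c) (nth 0 c) f).

Definition repunit (b i : nat) : nat := \sum_(0 <= l < i) b ^ l.

Definition upd (g : nat -> nat) (k v j : nat) : nat := if j == k then v else g j.

Definition add_head (q : nat) (c : seq nat) : seq nat :=
  if c is a :: r then (a + q) :: r else [:: q].

Lemma wsum0 g f : wsum 0 g f = 0.
Proof. by rewrite /wsum big_geq. Qed.

Lemma wsumSr L g f : wsum L.+1 g f = wsum L g f + g L * f L.
Proof. by rewrite /wsum big_nat_recr. Qed.

Lemma wsumSl L g f :
  wsum L.+1 g f = g 0 * f 0 + wsum L (fun i => g i.+1) (fun i => f i.+1).
Proof. by rewrite /wsum big_nat_recl. Qed.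

Lemma eq_wsum L g f1 f2 : (forall i, f1 i = f2 i) -> wsum L g f1 = wsum L g f2.
Proof. by move=> e; apply: eq_bigr => i _; rewrite e. Qed.

Lemma eq_wsum_coef L g1 g2 f :
  (forall i, i < L -> g1 i = g2 i) -> wsum L g1 f = wsum L g2 f.
Proof. by move=> e; apply: eq_big_nat => i /andP[_ /e ->]. Qed.

Lemma wsumD L g f1 f2 : wsum L g (fun i => f1 i + f2 i) = wsum L g f1 + wsum L g f2.
Proof. by rewrite /wsum -big_split; apply: eq_bigr => i _; rewrite mulnDr. Qed.

Lemma wsumMl L g k f : wsum L g (fun i => k * f i) = k * wsum L g f.
Proof. by rewrite /wsum big_distrr; apply: eq_bigr => i _; rewrite mulnCA. Qed.

Lemma wsum_upd L g v f : wsum L.+1 (upd g L v) f = wsum L g f + v * f L.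
Proof.
rewrite wsumSr /upd eqxx; congr (_ + _); apply: eq_wsum_coef => i.
by rewrite ltn_neqAle => /andP[/negPf ->].
Qed.

Lemma wsum_coef0 L g f : (forall i, i < L -> g i = 0) -> wsum L g f = 0.
Proof. by move=> g0; rewrite (@eq_wsum_coef _ _ (fun=> 0)) // /wsum big1. Qed.

Lemma wsum_ones_le L g B : (forall i, i < L -> g i <= B) -> wsum L g (fun=> 1) <= L * B.
Proof.
move=> g_le; rewrite -[X in _ <= X * B]subn0 -sum_nat_const_nat /wsum !big_nat.
by apply: leq_sum => i /andP[_ /g_le]; rewrite muln1.
Qed.

Lemma wsum_seq_cons a c f : wsum_seq (a :: c) f = a * f 0 + wsum_seq c (fun i => f i.+1).
Proof. exact: wsumSl. Qed.

Lemma wsum_seq_add_head q c f : wsum_seq (add_head q c) f = q * f 0 + wsum_seq c f.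
Proof.
case: c => [|a c]; first by rewrite /= wsumSl !wsum0.
by rewrite [add_head _ _]/= !wsum_seq_cons mulnDl addnA [a * _ + _]addnC.
Qed.

Lemma wsum_expnS b L g : wsum L g (fun i => b ^ i.+1) = b * wsum L g (expn b).
Proof. by rewrite -wsumMl; apply: eq_wsum => i; rewrite expnS. Qed.

Lemma repunit0 b : repunit b 0 = 0.
Proof. by rewrite /repunit big_geq. Qed.

Lemma repunitSr b i : repunit b i.+1 = repunit b i + b ^ i.
Proof. by rewrite /repunit big_nat_recr. Qed.

Lemma repunitSl b i : repunit b i.+1 = b * repunit b i + 1.
Proof.
elim: i => [|i IH]; first by rewrite repunitSr repunit0 muln0.
by rewrite repunitSr {1}IH repunitSr expnS mulnDr addnAC.
Qed.

Lemma repunit_gt0 b i : 0 < repunit b i.+1.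
Proof. by rewrite repunitSl addn1. Qed.

Lemma repunitE b i : 0 < b -> (b - 1) * repunit b i + 1 = b ^ i.
Proof.
case: b => // c _; rewrite subn1 /=.
elim: i => [|i IH]; first by rewrite repunit0 muln0.
by rewrite repunitSr expnS mulnDr -addnAC IH mulSn.
Qed.

Lemma wsum_expn_repunit b L g : 0 < b ->
  wsum L g (expn b) = (b - 1) * wsum L g (repunit b) + wsum L g (fun=> 1).
Proof. by move=> b_gt0; rewrite -wsumMl -wsumD; apply: eq_wsum => i; rewrite repunitE. Qed.

Lemma digit_sum_min b K d c : 0 < b -> (forall i, i < K -> d i < b) ->
  wsum_seq c (expn b) = wsum K d (expn b) ->
  wsum K d (fun=> 1) <= wsum_seq c (fun=> 1).
Proof.
move=> b_gt0; elim: K d c => [|K IH] d c d_lt; first by rewrite !wsum0.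
have d_lt' i : i < K -> d i.+1 < b by move=> ?; apply: d_lt.
rewrite 2!wsumSl wsum_expnS expn0 muln1.
case: c => [|c0 c]; rewrite ?wsum_seq_cons ?wsum_expnS ?expn0 ?muln1 => ev.
  rewrite wsum0 in ev *.
  have W0 : wsum K (fun i => d i.+1) (expn b) = 0 by nia.
  by have := IH _ [::] d_lt'; rewrite wsum0 W0 => /(_ erefl); lia.
have c0E := divn_eq c0 b.
have r_eq : c0 %% b = d 0.
  have := congr1 (modn^~ b) ev; rewrite /= ![_ + b * _]addnC ![b * _]mulnC !modnMDl.
  by rewrite [d 0 %% b]modn_small ?d_lt.
have Y_eq : c0 %/ b + wsum_seq c (expn b) = wsum K (fun i => d i.+1) (expn b).
  by apply/eqP; rewrite -(eqn_pmul2l b_gt0); apply/eqP; lia.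
have := IH _ (add_head (c0 %/ b) c) d_lt'.
rewrite !wsum_seq_add_head expn0 !muln1 Y_eq => /(_ erefl).
have : c0 %/ b <= c0 %/ b * b by rewrite leq_pmulr.
lia.
Qed.

Lemma pred_expansion_carry b K g c : 1 < b -> g 0 = 0 ->
  wsum_seq c (expn b) + 1 = wsum K.+1 g (expn b) ->
  exists2 c', wsum_seq c' (expn b) + 1 = wsum K (fun i => g i.+1) (expn b)
    & wsum_seq c' (fun=> 1) + (b - 1) <= wsum_seq c (fun=> 1).
Proof.
(* the lowest digit of c is -1 modulo b; carrying its quotient costs b - 1 *)
move=> b_gt1 g0; have b_gt0 := ltnW b_gt1.
rewrite wsumSl wsum_expnS g0 mul0n add0n.
set Y := wsum K _ _.
case: c => [|c0 c]; rewrite ?wsum_seq_cons ?wsum_expnS ?expn0 ?muln1 => ev.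
  by move: ev; rewrite wsum0 add0n => /esym/eqP; rewrite muln_eq1; lia.
set q := c0 %/ b; have c0E := divn_eq c0 b; have r_lt := ltn_pmod c0 b_gt0.
have Y_eq : Y = q + wsum_seq c (expn b) + 1.
  have : Y <= q + wsum_seq c (expn b) + 1 by rewrite -(leq_pmul2l b_gt0) !mulnDr; lia.
  have : q + wsum_seq c (expn b) < Y by rewrite -(ltn_pmul2l b_gt0) mulnDr; lia.
  lia.
have r_eq : c0 %% b = b - 1 by move: ev; rewrite Y_eq !mulnDr; lia.
exists (add_head q c); first by rewrite wsum_seq_add_head expn0 muln1; lia.
rewrite wsum_seq_add_head muln1.
have : q <= q * b by rewrite leq_pmulr.
lia.
Qed.

(* Conditions (i) and (ii) of R_b(n), on the indices below K. *)
Definition admissible (b K : nat) (g : nat -> nat) : Prop :=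
  forall j, j < K -> g j <= b /\ (g j = b -> forall i, i < j -> g i = 0).

Lemma admissibleW b K1 K2 g : K1 <= K2 -> admissible b K2 g -> admissible b K1 g.
Proof. by move=> le adm j lt; exact: adm (leq_trans lt le). Qed.

Lemma admissible_shift b K g : admissible b K.+1 g -> admissible b K (fun i => g i.+1).
Proof.
move=> adm j j_lt; have [le eq] := adm j.+1 j_lt.
by split=> // /eq z i; exact: z i.+1.
Qed.

Lemma admissible_upd b K g v : admissible b K g -> v <= b ->
  (v = b -> forall i, i < K -> g i = 0) -> admissible b K.+1 (upd g K v).
Proof.
move=> adm v_le v_eq j; rewrite ltnS leq_eqVlt /upd => /orP[/eqP->|j_lt].
  by rewrite eqxx; split=> // /v_eq z i i_lt; rewrite (ltn_eqF i_lt); exact: z.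
rewrite (ltn_eqF j_lt); have [g_le g_eq] := adm j j_lt; split=> // /g_eq z i i_lt.
by rewrite (ltn_eqF (ltn_trans i_lt j_lt)); exact: z.
Qed.

Lemma admissibleE b K t : t 0 = 0 -> admissible b K.+1 t <->
  (forall j, 1 <= j <= K -> t j <= b) /\
  (forall j, 1 <= j <= K -> t j = b -> forall i, 1 <= i < j -> t i = 0).
Proof.
move=> t0; split=> [adm|[t_le t_eq] [|j] j_lt].
- split=> j /andP[j_gt0 j_le]; have [t_le t_eq] := adm j j_le => //.
  by move=> /t_eq z i /andP[_]; exact: z.
- by rewrite t0; split=> // _ [].
- split; first exact: t_le.
  by move=> /(t_eq j.+1 j_lt) z [//|i] i_lt; exact: z.
Qed.

Lemma admissible_digit_sum_pred b K g c : 1 < b -> admissible b K g ->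
  wsum_seq c (expn b) + 1 = wsum K g (expn b) ->
  wsum K g (fun=> 1) <= wsum_seq c (fun=> 1) + 1.
Proof.
move=> b_gt1; elim: K g c => [|K IH] g c adm ev; first by move: ev; rewrite wsum0; lia.
have [g0|g0_gt0] := posnP (g 0).
  have [c' ev' sum_le] := pred_expansion_carry b_gt1 g0 ev.
  have := IH _ _ (admissible_shift adm) ev'.
  by rewrite wsumSl g0; lia.
(* lowering the lowest digit of g yields a base-b expansion of the predecessor *)
pose d := upd g 0 (g 0).-1.
have d_lt i : i < K.+1 -> d i < b.
  rewrite /d /upd; case: eqP => [->|/eqP i0] i_lt.
    by have [g0_le _] := adm 0 (ltn0Sn K); lia.
  have [g_le g_eq] := adm i i_lt.
  have : g i != b by apply/eqP => /g_eq/(_ 0); lia.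
  lia.
have ev' : wsum_seq c (expn b) = wsum K.+1 d (expn b).
  by move: ev; rewrite !wsumSl /d /upd eqxx /=; lia.
have := digit_sum_min (ltnW b_gt1) d_lt ev'.
by rewrite !wsumSl /d /upd eqxx /=; lia.
Qed.

Lemma admissible0_digit_sum_pred b K g c : 1 < b -> admissible b K.+1 g -> g 0 = 0 ->
  wsum_seq c (expn b) + 1 = wsum K.+1 g (expn b) ->
  wsum K.+1 g (fun=> 1) + (b - 2) <= wsum_seq c (fun=> 1).
Proof.
move=> b_gt1 adm g0 ev.
have [c' ev' sum_le] := pred_expansion_carry b_gt1 g0 ev.
have := admissible_digit_sum_pred b_gt1 (admissible_shift adm) ev'.
by rewrite wsumSl g0; lia.
Qed.

Lemma divn_mod_bound X e B : 0 < e -> X <= B * e ->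
  X %/ e <= B /\ (X %/ e = B -> X %% e = 0).
Proof.
move=> e_gt0 X_le; split; first by rewrite -(mulnK B e_gt0) leq_div2r.
by move=> qB; move: X_le; rewrite {1}(divn_eq X e) qB; lia.
Qed.

Lemma admissible_repunit_lt b K g : 0 < b -> admissible b K.+1 g ->
  wsum K.+1 g (repunit b) < repunit b K.+1.
Proof.
move=> b_gt0; elim: K g => [|K IH] g adm.
  by rewrite wsumSr wsum0 repunitSl !repunit0 !muln0.
rewrite wsumSr (repunitSl b K.+1); set e := repunit b K.+1.
have [gK|/eqP gK] := eqVneq (g K.+1) b.
  have [_ /(_ gK) z] := adm K.+1 (ltnSn _).
  by rewrite (wsum_coef0 _ z) gK; lia.
have gK_le : g K.+1 <= b - 1 by have [] := adm K.+1 (ltnSn _); lia.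
have := IH g (admissibleW (leqnSn _) adm).
have : g K.+1 * e <= (b - 1) * e by rewrite leq_mul2r gK_le orbT.
have : (b - 1) * e + e = b * e by rewrite mulnBl mul1n subnK // leq_pmull.
lia.
Qed.

Lemma admissible_digit_repunit_lt b K g d : 0 < K -> admissible b K g -> d < b - 1 ->
  wsum K g (repunit b) + d * repunit b K < (b - 1) * repunit b K.
Proof.
case: K => // K _ adm d_lt; set e := repunit b K.+1.
have b_gt0 : 0 < b by lia.
have := admissible_repunit_lt b_gt0 adm.
have : d * e <= (b - 2) * e by rewrite leq_mul2r; apply/orP; right; lia.
have : (b - 2) * e + e = (b - 1) * e by rewrite -mulSnr; congr (_ * _); lia.
lia.
Qed.

Lemma wsum_repunit_eq0 b K g : g 0 = 0 -> wsum K g (repunit b) = 0 ->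
  forall i, i < K -> g i = 0.
Proof.
move=> g0 /eqP; rewrite /wsum sum_nat_seq_eq0 => /allP z [//|i] i_lt.
move: (z i.+1); rewrite mem_index_iota i_lt muln_eq0 => /(_ isT) /orP[/eqP //|].
by rewrite repunitSl addn1.
Qed.

Lemma admissible_repunit_surj b K X : 0 < b -> X < repunit b K.+1 ->
  exists2 g, g 0 = 0 /\ admissible b K.+1 g & wsum K.+1 g (repunit b) = X.
Proof.
move=> b_gt0; elim: K X => [|K IH] X.
  rewrite repunitSl repunit0 muln0 ltnS leqn0 => /eqP ->.
  by exists (fun=> 0); [split=> // j _; split | rewrite wsum_coef0].
rewrite repunitSl addn1 ltnS => X_le.
set e := repunit b K.+1; have e_gt0 : 0 < e := repunit_gt0 b K.
have [q_le q_eq] := divn_mod_bound e_gt0 X_le.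
have [g [g0 adm] gX] := IH _ (ltn_pmod X e_gt0).
exists (upd g K.+1 (X %/ e)).
  split=> //; apply: admissible_upd => // /q_eq r0.
  exact: wsum_repunit_eq0 g0 (etrans gX r0).
by rewrite wsum_upd gX addnC -divn_eq.
Qed.

Lemma coprime_lincomb_eq a m E Y E' Y' : 0 < m -> coprime m a -> E < m ->
  a * E + m * Y = a * E' + m * Y' -> exists k, E' = E + k * m /\ Y = Y' + a * k.
Proof.
move=> m_gt0 co_ma E_lt ev.
have dvd_diff u v : v <= u -> a * u = a * v %[mod m] -> m %| u - v.
  move=> le /eqP; rewrite eqn_mod_dvd ?leq_mul2l ?le ?orbT // -mulnBr.
  by rewrite Gauss_dvdr.
have amod : a * E = a * E' %[mod m].
  by have := congr1 (modn^~ m) ev; rewrite /= ![_ + m * _]addnC ![m * _]mulnC !modnMDl.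
have [E'_lt|E_le] := ltnP E' E.
  have := dvdn_leq _ (dvd_diff _ _ (ltnW E'_lt) amod); rewrite subn_gt0 => /(_ E'_lt).
  lia.
have /dvdnP[k Ek] := dvd_diff _ _ E_le (esym amod).
have E'E : E' = E + k * m by lia.
exists k; split=> //; apply/eqP; rewrite -(eqn_pmul2l m_gt0); apply/eqP.
by move: ev; rewrite E'E; nia.
Qed.

Lemma apery_eq_mod (S : nat -> Prop) m x y : (forall z, S z -> S (z + m)) ->
  inApery S m x -> inApery S m y -> x = y %[mod m] -> x = y.
Proof.
move=> S_add; have S_addM k z : S z -> S (z + k * m).
  by elim: k z => [|k IH] z Sz; rewrite ?addn0 // mulSnr addnA; apply/S_add/IH.
wlog xy : x y / x <= y.
  move=> gen Ax Ay exy; case: (leqP x y) => [|/ltnW] le; first exact: gen.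
  exact: esym (gen y x le Ay Ax (esym exy)).
move=> [Sx _] [_ Ay] /eqP; rewrite eq_sym eqn_mod_dvd // => /dvdnP[[|k] yx]; first by lia.
exfalso; apply: Ay; split; first by nia.
have -> : y - m = x + k * m by move: yx; rewrite mulSn; lia.
exact: S_addM.
Qed.

Lemma inT_wsum_seq b n x : inT b n x <-> exists c, x = wsum_seq c (sgen b n).
Proof. by split=> -[c ->]; exists c; rewrite /wsum big_mkord. Qed.

Lemma inT_wsum b n L g : inT b n (wsum L g (sgen b n)).
Proof.
apply/inT_wsum_seq; exists (mkseq g L); rewrite size_mkseq.
by apply: eq_wsum_coef => i i_lt; rewrite nth_mkseq.
Qed.

Lemma inT_add_sgen0 b n x : inT b n x -> inT b n (x + sgen b n 0).
Proof.
move=> /inT_wsum_seq[c ->]; apply/inT_wsum_seq; exists (add_head 1 c).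
by rewrite wsum_seq_add_head mul1n addnC.
Qed.

Lemma sgenE b n i : 0 < b -> sgen b n i = sgen b n 0 * b ^ i + (b - 1) * repunit b i.
Proof.
move=> b_gt0; rewrite /sgen addn0 expnD mulnA.
have P_gt0 : 0 < b.+1 * b ^ n by rewrite muln_gt0 expn_gt0 b_gt0.
have := repunitE i b_gt0; have := leq_pmull (b ^ i) P_gt0.
rewrite mulnBl mul1n; lia.
Qed.

Lemma sgen0_repunit b n : 0 < b ->
  sgen b n 0 = (b - 1) * (repunit b n.+1 + repunit b n) + 1.
Proof.
move=> b_gt0; rewrite /sgen addn0 mulnDr.
have := repunitE n.+1 b_gt0; have := repunitE n b_gt0; rewrite expnS mulSn.
have : 0 < b ^ n by rewrite expn_gt0 b_gt0.
lia.
Qed.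

Lemma coprime_sgen0 b n : 0 < b -> coprime (sgen b n 0) (b - 1).
Proof.
by move=> b_gt0; rewrite coprime_sym /coprime sgen0_repunit // mulnC gcdnMDl gcdn1.
Qed.

Lemma inR_admissible b n t : t 0 = 0 -> inR b n t <->
  [/\ admissible b n.+2 t, t n.+1 <= b - 1 &
      t n.+1 = b - 1 ->
      t n <= b - 1 /\ (t n = b - 1 -> forall i, 1 <= i <= n.-1 -> t i = 0)].
Proof.
move=> t0; have adm := @admissibleE b n.+1 t t0.
split=> [[t_le [top_le [t_eq top_eq]]] | [/adm[t_le t_eq] top_le top_eq]] //.
by split=> //; apply/adm.
Qed.

Lemma eq_inR b n t t' : 0 < n -> (forall j, 0 < j -> t j = t' j) ->
  inR b n t -> inR b n t'.
Proof.
move=> n_gt0 tt' [t_le [top_le [t_eq top_eq]]].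
have e j : 0 < j -> t' j = t j by move/tt'.
split; [|split; [|split]].
- by move=> j /[dup] /andP[/e ->] _ /t_le.
- by rewrite e.
- move=> j /[dup] /andP[/e ->] _ /t_eq z /z {}z i /[dup] /andP[/e ->] _.
  exact: z.
- rewrite !e // => /top_eq[tn_le tn_eq]; split=> // /tn_eq z i /[dup] /andP[/e ->] _.
  exact: z.
Qed.

Lemma inR_upd_top_lt b n g q : g 0 = 0 -> admissible b n.+1 g -> q < b - 1 ->
  upd g n.+1 q 0 = 0 /\ inR b n (upd g n.+1 q).
Proof.
move=> g0 adm q_lt; have t0 : upd g n.+1 q 0 = 0 by rewrite /upd.
split=> //; apply/(inR_admissible b n t0); rewrite {2 3}/upd eqxx.
by split; [apply: admissible_upd => //; lia | lia | lia].
Qed.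

Lemma inR_upd_top_eq b n g q : 0 < b -> 0 < n -> g 0 = 0 -> admissible b n g ->
  q <= b - 1 -> (q = b - 1 -> forall i, i < n -> g i = 0) ->
  upd (upd g n q) n.+1 (b - 1) 0 = 0 /\ inR b n (upd (upd g n q) n.+1 (b - 1)).
Proof.
move=> b_gt0 n_gt0 g0 adm q_le q_eq.
have t0 : upd (upd g n q) n.+1 (b - 1) 0 = 0 by rewrite /upd /= (ltn_eqF n_gt0).
split=> //; apply/(inR_admissible b n t0); split.
- apply: admissible_upd; last by move=> ?; exfalso; lia.
    by apply: admissible_upd => // [|?]; [lia | exfalso; lia].
  lia.
- by rewrite /upd eqxx.
- rewrite /upd !eqxx ltn_eqF // => _; split=> // /q_eq z i /andP[i_gt0 i_le].
  by rewrite !ltn_eqF ?z //; lia.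
Qed.

Section AperySet.

Variables b n : nat.
Hypothesis b_gt1 : 1 < b.
Hypothesis n_gt0 : 0 < n.

Let b_gt0 : 0 < b := ltnW b_gt1.

Local Notation M := (sgen b n 0).

Lemma sgen0_gt0 : 0 < M.
Proof. by rewrite sgen0_repunit // addn1. Qed.

Lemma wsum_sgen L g :
  wsum L g (sgen b n) = M * wsum L g (expn b) + (b - 1) * wsum L g (repunit b).
Proof. by rewrite -!wsumMl -wsumD; apply: eq_wsum => i; rewrite sgenE. Qed.

Lemma digit_bound_sgen0 : n.+2 * b <= (b - 1) * (M + 1).
Proof.
have n_lt := ltn_expl n b_gt1.
have -> : M + 1 = b.+1 * b ^ n.
  by rewrite /sgen addn0 subnK // muln_gt0 expn_gt0 b_gt0.
have : (b - 1) * b.+1 * n.+1 <= (b - 1) * b.+1 * b ^ n by rewrite leq_mul2l n_lt orbT.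
rewrite mulnA; nia.
Qed.

Lemma inR_repunit_lt t : t 0 = 0 -> inR b n t -> wsum n.+2 t (repunit b) < M.
Proof.
move=> t0 /(inR_admissible b n t0)[adm top_le top_eq].
rewrite sgen0_repunit // wsumSr mulnDr.
have [top_lt|top_b] : t n.+1 < b - 1 \/ t n.+1 = b - 1 by lia.
  have := admissible_digit_repunit_lt (ltn0Sn n) (admissibleW (leqnSn _) adm) top_lt.
  by move=> /leq_trans; apply; rewrite -addnA leq_addr.
have [tn_le tn_eq] := top_eq top_b.
have adm_n : admissible b n t by apply: admissibleW adm; lia.
rewrite wsumSr top_b.
have [tn_lt|tn_b] : t n < b - 1 \/ t n = b - 1 by lia.
  by have := admissible_digit_repunit_lt n_gt0 adm_n tn_lt; lia.
have low0 i : i < n -> t i = 0 by case: i => [//|i] i_lt; apply: tn_eq; lia.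
by rewrite (wsum_coef0 _ low0) tn_b; lia.
Qed.

Lemma inR_repunit_surj X : X < M ->
  exists2 t, t 0 = 0 /\ inR b n t & wsum n.+2 t (repunit b) = X.
Proof.
rewrite sgen0_repunit // addn1 ltnS mulnDr => X_le.
have e1_gt0 := repunit_gt0 b n.
have e0_gt0 : 0 < repunit b n by rewrite -(prednK n_gt0) repunit_gt0.
have [X_lt|X_ge] := ltnP X ((b - 1) * repunit b n.+1).
  have [g [g0 adm] gX] := admissible_repunit_surj b_gt0 (ltn_pmod X e1_gt0).
  exists (upd g n.+1 (X %/ repunit b n.+1)).
    by apply: inR_upd_top_lt g0 adm _; rewrite ltn_divLR // mulnC.
  by rewrite wsum_upd gX addnC -divn_eq.
set Z := X - (b - 1) * repunit b n.+1.
have Z_le : Z <= (b - 1) * repunit b n by rewrite /Z; lia.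
have [q_le q_eq] := divn_mod_bound e0_gt0 Z_le.
have := @admissible_repunit_surj b n.-1 (Z %% repunit b n) b_gt0.
rewrite prednK // => /(_ (ltn_pmod Z e0_gt0))[g [g0 adm] gX].
exists (upd (upd g n (Z %/ repunit b n)) n.+1 (b - 1)).
  apply: inR_upd_top_eq => // /q_eq r0.
  exact: wsum_repunit_eq0 g0 (etrans gX r0).
by rewrite !wsum_upd gX [_ %% _ + _]addnC -divn_eq /Z subnK.
Qed.

Lemma inR_apery t : t 0 = 0 -> inR b n t ->
  inApery (inT b n) M (wsum n.+2 t (sgen b n)).
Proof.
move=> t0 tR; split; first exact: inT_wsum.
move=> [M_le /inT_wsum_seq[c ec]].
have [adm _ _] := (inR_admissible b n t0).1 tR.
have [k [Ec Yt]] : exists k,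
    wsum_seq c (repunit b) = wsum n.+2 t (repunit b) + k * M /\
    wsum n.+2 t (expn b) = wsum_seq c (expn b) + 1 + (b - 1) * k.
  apply: coprime_lincomb_eq sgen0_gt0 (coprime_sgen0 n b_gt0) (inR_repunit_lt t0 tR) _.
  by move: ec M_le; rewrite !wsum_sgen mulnDr; lia.
have Nt := wsum_expn_repunit n.+2 t b_gt0.
have Nc := wsum_expn_repunit (size c) (nth 0 c) b_gt0.
case: k Ec Yt => [|k] Ec Yt.
  have ev : wsum_seq c (expn b) + 1 = wsum n.+2 t (expn b) by rewrite Yt muln0 addn0.
  by have := admissible0_digit_sum_pred b_gt1 adm t0 ev; lia.
have Nt_big : wsum n.+2 t (fun=> 1) =
    wsum_seq c (fun=> 1) + 1 + (b - 1) * k.+1 * (M + 1) by nia.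
have := wsum_ones_le (fun i (i_lt : i < n.+2) => (adm i i_lt).1).
have := digit_bound_sgen0.
nia.
Qed.

Lemma apery_inR x : inApery (inT b n) M x ->
  exists2 t, t 0 = 0 /\ inR b n t & x = wsum n.+2 t (sgen b n).
Proof.
move=> xA; have [c ec] := (inT_wsum_seq b n x).1 xA.1.
have [t [t0 tR] tE] := inR_repunit_surj (ltn_pmod (wsum_seq c (repunit b)) sgen0_gt0).
exists t => //; apply: apery_eq_mod (@inT_add_sgen0 b n) xA (inR_apery t0 tR) _.
by rewrite ec !wsum_sgen tE ![M * _]mulnC !modnMDl modnMmr.
Qed.

End AperySet.

Theorem mainTheorem3 (b n : nat) (hb : 2 <= b) (hn : 1 <= n) (x : nat) :
  inApery (inT b n) (sgen b n 0) x <->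
  exists t : nat -> nat,
    inR b n t /\ x = \sum_(1 <= j < n.+2) t j * sgen b n j.
Proof.
have wsum_from1 t : t 0 = 0 ->
    wsum n.+2 t (sgen b n) = \sum_(1 <= j < n.+2) t j * sgen b n j.
  by move=> t0; rewrite /wsum big_ltn // t0 mul0n add0n.
split=> [/(apery_inR hb hn)[t [t0 tR] ->] | [t [tR ->]]].
  by exists t; rewrite wsum_from1.
have t'0 : upd t 0 0 0 = 0 by [].
have t'R : inR b n (upd t 0 0) by apply: eq_inR hn _ tR => -[].
have -> : \sum_(1 <= j < n.+2) t j * sgen b n j = wsum n.+2 (upd t 0 0) (sgen b n).
  by rewrite wsum_from1 //; apply: eq_big_nat => -[].
exact: (@inR_apery b n hb hn (upd t 0 0) t'0 t'R).
Qed.
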